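(* Let $(\Gamma,\Lambda)$ be a Hecke pair with $\Lambda$ isomorphic to $\mathbb{Z}^n$. Then $\mathbb{R}^n$ is an engulfing group of $(\Gamma,\Lambda)$.
   Context: A Hecke pair $(\Gamma,\Lambda)$ is a group $\Gamma$ with a commensurated subgroup $\Lambda$ (commensurable, i.e. finite index intersection, with all its conjugates). A locally compact group $E$ is an engulfing group of $(\Gamma,\Lambda)$ if there are a homomorphism $\rho:\Lambda\to E$ with finite kernel and discrete cocompact image, and a homomorphism $\Delta:\Gamma\to\mathrm{Aut}(E)$ extending $h\mapsto$ conjugation by $\rho(h)$ on $\Lambda$, such that for every $g\in\Gamma$, $\Delta(g)(\rho(h))=\rho(ghg^{-1})$ for all $h$ in some finite index subgroup of $\Lambda$. *)

From HB Require Import structures.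
From mathcomp Require Import all_boot all_order all_algebra.
From mathcomp Require Import all_classical all_reals all_analysis.

Set Implicit Arguments.
Unset Strict Implicit.
Unset Printing Implicit Defensive.

Import Order.TTheory GRing.Theory Num.Theory.
Import numFieldNormedType.Exports.
Local Open Scope classical_set_scope.

Section GroupNotions.
Variable G : groupType.
Local Open Scope group_scope.

Definition is_subgroup (H : set G) : Prop :=
  [/\ H 1, (forall x y, H x -> H y -> H (x * y)) & (forall x, H x -> H x^-1)].

Definition finite_index (K H : set G) : Prop :=
  exists s : seq G, forall k, K k -> exists2 t, t \in s & H (t^-1 * k).

Definition conj_set (g : G) (H : set G) : set G :=
  [set g * h * g^-1 | h in H].

Definition hecke_pair (L : set G) : Prop :=
  is_subgroup L /\
  forall g : G, finite_index L (L `&` conj_set g L) /\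
                finite_index (conj_set g L) (L `&` conj_set g L).

End GroupNotions.

Definition isomorphic_to_Zn (G : groupType) (L : set G) (n : nat) : Prop :=
  exists phi : G -> 'rV[int]_n,
    [/\ (forall x y, L x -> L y -> phi (x * y)%g = phi x + phi y)%R,
        (forall x y, L x -> L y -> phi x = phi y -> x = y) &
        (forall v, exists2 h, L h & phi h = v)].

Definition is_top_aut (R : realType) (n : nat) (f : 'rV[R]_n -> 'rV[R]_n) : Prop :=
  (forall x y, f (x + y)%R = (f x + f y)%R) /\
  exists g : 'rV[R]_n -> 'rV[R]_n,
    [/\ cancel f g, cancel g f, continuous (f : 'rV[R]_n -> 'rV[R]_n) & continuous (g : 'rV[R]_n -> 'rV[R]_n)].

Definition engulfing_Rn (R : realType) (n : nat) (G : groupType) (L : set G) : Prop :=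
  exists (rho : G -> 'rV[R]_n) (Delta : G -> ('rV[R]_n -> 'rV[R]_n)),
    (
     (forall x y, L x -> L y -> rho (x * y)%g = (rho x + rho y)%R) /\
     finite_set [set h | L h /\ rho h = 0%R] /\
     (* discrete image *)
     (forall x, (rho @` L) x ->
        exists2 U, nbhs x U & forall y, (rho @` L) y -> U y -> y = x) /\
     (* cocompact image *)
     (exists2 K : set 'rV[R]_n, compact K &
        forall v, exists k h, [/\ K k, L h & v = (k + rho h)%R]) /\
     (forall g, is_top_aut (Delta g)) /\
     (forall g1 g2, Delta (g1 * g2)%g = Delta g1 \o Delta g2) /\
     (* extending conjugation by rho(h) on Λ *)
     (forall h, L h -> Delta h = (fun x => rho h + x - rho h)%R) /\
     (forall g : G, exists L' : set G,
        [/\ is_subgroup L', L' `<=` L, finite_index L L' &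
            forall h, L' h -> L (g * h * g^-1)%g /\
                              Delta g (rho h) = rho (g * h * g^-1)%g])).

From HB Require Import structures.
From mathcomp Require Import all_boot all_order all_algebra.
From mathcomp Require Import all_classical all_reals all_analysis.
From mathcomp Require Import zify lra.

(* Transport everything to Z^n through the isomorphism phi : Lambda -> Z^n.
   For g in Gamma, conjugation by g maps the finite-index subgroup
   Lambda ∩ g^-1 Lambda g into Lambda, so (through phi) it is an additive map
   defined on a finite-index subgroup of Z^n.  Such a subgroup contains m Z^n
   for some m > 0 (pigeonhole), so dividing by m the map extends to a real
   matrix A_g, which is unique because it is determined on every m e_i.
   Uniqueness gives A_(g1 g2) = A_g2 A_g1 (row vectors), and A_h = 1 for h in
   Lambda since Lambda is abelian.  Then rho = phi followed by Z^n ⊂ R^n and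
   Delta(g) x = x A_g form the engulfing data: rho is injective, and Z^n is
   discrete and cocompact in R^n (R^n = [0,1]^n + Z^n). *)

Set Implicit Arguments.
Unset Strict Implicit.
Unset Printing Implicit Defensive.

Import Order.TTheory GRing.Theory Num.Theory.
Import numFieldNormedType.Exports.
Local Open Scope classical_set_scope.
Local Open Scope ring_scope.

Lemma continuous_mulmxr (R : numFieldType) p q (A : 'M[R]_(p, q)) :
  continuous (fun u : 'rV[R]_p => u *m A).
Proof.
under eq_fun do rewrite mulmx_sum_row.
apply: continuous_big => [|i _]; first exact: add_continuous.
by move=> u; apply: continuousZr_tmp; exact: coord_continuous.
Qed.

Lemma mx_natmul_inj (R : numDomainType) p q k (A B : 'M[R]_(p, q)) :
  (0 < k)%N -> A *+ k = B *+ k -> A = B.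
Proof.
move=> k_gt0 /matrixP eqAB; apply/matrixP => i j.
by apply: (pmulrnI k_gt0); have := eqAB i j; rewrite !mulmxnE.
Qed.

Lemma map_mx_intr_inj (R : numDomainType) p q :
  injective (map_mx intr : 'M[int]_(p, q) -> 'M[R]_(p, q)).
Proof.
move=> A B /matrixP eqAB; apply/matrixP => i j.
by apply: (@intr_inj R); have := eqAB i j; rewrite !mxE.
Qed.

Lemma mulmxMnl (R : pzRingType) p q r (A : 'M[R]_(p, q)) (B : 'M[R]_(q, r)) k :
  (A *+ k) *m B = (A *m B) *+ k.
Proof. exact: raddfMn (mulmxr B) k A. Qed.

Lemma map_mxMn (aR rR : nmodType) (f : {additive aR -> rR}) p q
    (A : 'M[aR]_(p, q)) k :
  map_mx f (A *+ k) = map_mx f A *+ k.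
Proof. exact: raddfMn. Qed.

Lemma conjgVE (G : groupType) (g h : G) : (h ^ g^-1 = g * h * g^-1)%g.
Proof. by rewrite conjgE invgK mulgA. Qed.

Lemma conj_setE (G : groupType) (g : G) (H : set G) :
  conj_set g H = [set k | H (k ^ g)%g].
Proof.
apply/seteqP; split=> k /=; first by case=> h Hh <-; rewrite -conjgVE conjgKV.
by move=> Hk; exists (k ^ g)%g => //; rewrite -conjgVE conjgK.
Qed.

Lemma is_subgroupI (G : groupType) (H K : set G) :
  is_subgroup H -> is_subgroup K -> is_subgroup (H `&` K).
Proof.
case=> H1 HM HV [K1 KM KV]; split=> // [x y [Hx Kx] [Hy Ky] | x [Hx Kx]].
  by split; [exact: HM | exact: KM].
by split; [exact: HV | exact: KV].
Qed.

Lemma is_subgroup_conj_set (G : groupType) (g : G) (H : set G) :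
  is_subgroup H -> is_subgroup (conj_set g H).
Proof.
rewrite conj_setE => -[H1 HM HV]; split=> /= [|x y Hx Hy|x Hx].
- by rewrite conj1g.
- by rewrite conjMg; exact: HM.
- by rewrite conjVg; exact: HV.
Qed.

Section SubgroupOfZmodule.
Variables (V : zmodType) (M : set V).
Hypotheses (M0 : M 0) (MB : forall u v, M u -> M v -> M (u - v)).

Lemma subgroupMn u k : M u -> M (u *+ k).
Proof.
move=> Mu; elim: k => [|k IHk]; first by rewrite mulr0n.
rewrite mulrS -[u *+ k]opprK; apply: MB => //.
by rewrite -sub0r; exact: MB.
Qed.

Lemma raddfMn_on (W : zmodType) (f : V -> W) :
  (forall u v, M u -> M v -> f (u - v) = f u - f v) ->
  forall v k, M v -> f (v *+ k) = f v *+ k.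
Proof.
move=> fB v k Mv; elim: k => [|k IHk].
  by rewrite !mulr0n -(subrr v) fB // subrr.
have -> : f (v *+ k.+1) = f (v *+ k.+1 - v) + f v.
  by rewrite fB ?subrK //; exact: subgroupMn.
by rewrite !mulrSr addrK IHk.
Qed.

Lemma subgroup_natmul_bounded (S : seq V) :
  (forall v, exists2 u, u \in S & M (v - u)) ->
  forall v, exists2 d : nat, (0 < d <= size S)%N & M (v *+ d).
Proof.
move=> cover v.
pose rep j := s2val (cid2 (cover (v *+ j))).
have rep_in j : rep j \in S by rewrite /rep; case: cid2.
have rep_coset j : M (v *+ j - rep j) by rewrite /rep; case: cid2.
have : ~~ uniq (map rep (iota 0 (size S).+1)).
  apply/negP => /(@uniq_leq_size _ _ S).
  rewrite size_map size_iota ltnn => le_S; suff: false by [].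
  by apply: le_S => _ /mapP[j _ ->].
case/(uniqPn 0) => i [j [lt_ij]]; rewrite size_map size_iota => lt_jS.
have lt_iS := ltn_trans lt_ij lt_jS.
rewrite !(nth_map 0) ?size_iota // !nth_iota // !add0n => rep_ij.
exists (j - i)%N; first by rewrite subn_gt0 lt_ij (leq_trans (leq_subr i j)).
have := MB (rep_coset j) (rep_coset i).
by rewrite rep_ij opprB addrA subrK -mulrnBr // ltnW.
Qed.

Lemma finite_index_natmul (S : seq V) :
  (forall v, exists2 u, u \in S & M (v - u)) ->
  exists2 m : nat, (0 < m)%N & forall v, M (v *+ m).
Proof.
move=> cover; exists (size S)`!; first exact: fact_gt0.
move=> v; have [d /andP[d_gt0 le_dS] Mvd] := subgroup_natmul_bounded cover v.
have /dvdnP[q ->] : (d %| (size S)`!)%N by rewrite dvdn_fact // d_gt0.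
by rewrite mulnC mulrnA; exact: subgroupMn.
Qed.

End SubgroupOfZmodule.

Lemma raddf_rV_mulmx p q (f : 'rV[int]_p -> 'rV[int]_q) :
  (forall u v, f (u - v) = f u - f v) ->
  forall v, f v = v *m \matrix_i f (delta_mx 0 i).
Proof.
move=> fB v.
pose F : {additive 'rV[int]_p -> 'rV[int]_q} :=
  HB.pack f (GRing.isZmodMorphism.Build _ _ f fB).
rewrite mulmx_sum_row {1}(row_sum_delta v) -[f _]/(F _) raddf_sum.
by apply: eq_bigr => j _; rewrite rowK -[v 0 j]intz !scaler_int raddfMz.
Qed.

Lemma intr_rV_dist_lt1 (R : realType) p (u v : 'rV[int]_p) :
  `|map_mx intr u - map_mx intr v : 'rV[R]_p| < 1 -> u = v.
Proof.
move=> dist_lt1; apply/rowP => j; apply/eqP; rewrite -subr_eq0.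
have : `|(map_mx intr u - map_mx intr v : 'rV[R]_p) 0 j| < 1.
  apply: le_lt_trans dist_lt1; rewrite [leRHS]mx_normrE.
  by apply/bigmax_geP; right; exists (0, j).
rewrite !mxE -intrB -intr_norm ltrz1; lia.
Qed.

Lemma unit_cube_int_translate (R : realType) p (v : 'rV[R]_p) :
  exists w : 'rV[int]_p, forall i, `[0, 1]%classic ((v - map_mx intr w) 0 i).
Proof.
exists (\row_i Num.floor (v 0 i)) => i; rewrite /= !mxE in_itv /=.
have := floor_le (v 0 i); have := floorD1_gt (v 0 i); rewrite intrD.
by move=> *; apply/andP; split; lra.
Qed.

Section LatticeIsoZn.
Variables (G : groupType) (L : set G) (n : nat) (R : realType).
Variable phi : G -> 'rV[int]_n.
Hypothesis L_subgroup : is_subgroup L.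
Hypothesis commensurated : forall g, finite_index L (L `&` conj_set g L).
Hypothesis phiM : forall x y, L x -> L y -> phi (x * y)%g = phi x + phi y.
Hypothesis phi_inj : forall x y, L x -> L y -> phi x = phi y -> x = y.
Hypothesis phi_surj : forall v, exists2 h, L h & phi h = v.

Let L1 : L 1%g. Proof. by case: L_subgroup. Qed.
Let LM x y : L x -> L y -> L (x * y)%g.
Proof. by case: L_subgroup => _ + _; apply. Qed.
Let LV x : L x -> L x^-1%g. Proof. by case: L_subgroup => _ _; apply. Qed.

Lemma phi1 : phi 1%g = 0.
Proof. by apply: (addrI (phi 1%g)); rewrite addr0 -phiM ?mulg1. Qed.

Lemma phiV x : L x -> phi x^-1%g = - phi x.
Proof.
by move=> Lx; apply/eqP; rewrite -addr_eq0 -phiM ?mulVg ?phi1 //; exact: LV.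
Qed.

Definition phi_inv v : G := s2val (cid2 (phi_surj v)).

Lemma phi_invL v : L (phi_inv v).
Proof. exact: s2valP (cid2 (phi_surj v)). Qed.

Lemma phi_invK v : phi (phi_inv v) = v.
Proof. exact: s2valP' (cid2 (phi_surj v)). Qed.

Lemma phiK x : L x -> phi_inv (phi x) = x.
Proof.
by move=> Lx; apply: phi_inj => //; [exact: phi_invL | rewrite phi_invK].
Qed.

Lemma phi_inv0 : phi_inv 0 = 1%g.
Proof. by rewrite -phi1 phiK. Qed.

Lemma phi_invB u v : phi_inv (u - v) = (phi_inv u * (phi_inv v)^-1)%g.
Proof.
have [Lu Lv] := (phi_invL u, phi_invL v); have LVv := LV Lv.
by rewrite -{1}[u]phi_invK -{1}[v]phi_invK -phiV // -phiM // phiK //; exact: LM.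
Qed.

(* In MathComp [x ^ y] is [y^-1 * x * y], so [x ^ g^-1] is [g * x * g^-1]. *)
Definition conj_dom g : set 'rV[int]_n := [set v | L (phi_inv v ^ g^-1)%g].

Definition conj_rV g v : 'rV[int]_n := phi (phi_inv v ^ g^-1)%g.

Lemma conj_dom0 g : conj_dom g 0.
Proof. by rewrite /conj_dom /= phi_inv0 conj1g. Qed.

Lemma conj_domB g u v : conj_dom g u -> conj_dom g v -> conj_dom g (u - v).
Proof.
rewrite /conj_dom /= phi_invB conjMg conjVg => Lu Lv.
by apply: LM => //; exact: LV.
Qed.

Lemma conj_rVB g u v :
  conj_dom g u -> conj_dom g v -> conj_rV g (u - v) = conj_rV g u - conj_rV g v.
Proof.
rewrite /conj_rV phi_invB conjMg conjVg => Lu Lv.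
by rewrite phiM ?phiV //; exact: LV.
Qed.

Lemma conj_rVMn g v k : conj_dom g v -> conj_rV g (v *+ k) = conj_rV g v *+ k.
Proof.
exact: (raddfMn_on (conj_dom0 g) (@conj_domB g) (f := conj_rV g) (@conj_rVB g)).
Qed.

Lemma conj_dom_natmul g :
  exists2 m : nat, (0 < m)%N & forall v, conj_dom g (v *+ m).
Proof.
have [s cover] := commensurated g^-1%g.
apply: (finite_index_natmul (conj_dom0 g) (@conj_domB g) (S := map phi s)) => v.
have Lv := phi_invL v.
have [t ts [Ltv]] := cover _ Lv; rewrite conj_setE /= => Lconj.
have Lt : L t.
  rewrite -[t]invgK; apply: LV.
  by rewrite -(mulgK (phi_inv v) t^-1%g); apply: LM => //; exact: LV.
exists (phi t); first exact: map_f.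
have -> : v - phi t = phi (t^-1 * phi_inv v)%g.
  by rewrite phiM ?phiV ?phi_invK 1?addrC //; exact: LV.
by rewrite /conj_dom /= phiK.
Qed.

Lemma conj_rVL h v : L h -> conj_rV h v = v.
Proof.
move=> Lh; have Lv := phi_invL v; have LVh := LV Lh.
by rewrite /conj_rV conjgVE !phiM ?phiV ?phi_invK 1?addrC ?addKr //; exact: LM.
Qed.

Lemma conj_dom_mul g1 g2 v :
  conj_dom g2 v -> conj_dom (g1 * g2)%g v -> conj_dom g1 (conj_rV g2 v).
Proof. by rewrite /conj_dom /conj_rV /= invgM conjgM => /phiK ->. Qed.

Lemma conj_rV_mul g1 g2 v :
  conj_dom g2 v -> conj_rV (g1 * g2)%g v = conj_rV g1 (conj_rV g2 v).
Proof. by rewrite /conj_rV /conj_dom /= invgM conjgM => /phiK ->. Qed.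

Lemma conj_domMn g v k : conj_dom g v -> conj_dom g (v *+ k).
Proof. exact: subgroupMn (conj_dom0 g) (@conj_domB g) v k. Qed.

Definition represents_conj g (A : 'M[R]_n) :=
  forall v, conj_dom g v -> map_mx intr v *m A = map_mx intr (conj_rV g v).

Lemma represents_conj_exists g : exists A, represents_conj g A.
Proof.
have [m m_gt0 Dm] := conj_dom_natmul g.
pose f v := conj_rV g (v *+ m).
have fB u v : f (u - v) = f u - f v by rewrite /f mulrnBl conj_rVB.
exists ((m%:R : R)^-1 *: map_mx intr (\matrix_i f (delta_mx 0 i))) => v Dv.
rewrite -scalemxAr -map_mxM -(raddf_rV_mulmx fB) /f conj_rVMn // map_mxMn.
by rewrite -[map_mx _ _ *+ m]scaler_nat scalerA mulVf ?scale1r // pnatr_eq0 -lt0n.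
Qed.

Lemma represents_conj_uniq g A B :
  represents_conj g A -> represents_conj g B -> A = B.
Proof.
move=> reprA reprB; have [m m_gt0 Dm] := conj_dom_natmul g.
apply/row_matrixP => i; apply: (mx_natmul_inj m_gt0).
have intr_delta : map_mx intr (delta_mx 0 i *+ m) = delta_mx 0 i *+ m :> 'rV[R]_n.
  by rewrite map_mxMn map_delta_mx.
by rewrite !rowE -!mulmxMnl -intr_delta reprA // reprB.
Qed.

Definition conj_mx g : 'M[R]_n := projT1 (cid (represents_conj_exists g)).

Lemma conj_mxP g : represents_conj g (conj_mx g).
Proof. exact: projT2 (cid (represents_conj_exists g)). Qed.

Lemma conj_mxL h : L h -> conj_mx h = 1%:M.
Proof.
move=> Lh; apply: (represents_conj_uniq (@conj_mxP h)) => v _.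
by rewrite mulmx1 conj_rVL.
Qed.

Lemma represents_conj_mul g1 g2 :
  represents_conj (g1 * g2)%g (conj_mx g2 *m conj_mx g1).
Proof.
move=> v Dv; have [m m_gt0 Dm] := conj_dom_natmul g2.
have D1 := conj_dom_mul (Dm v) (conj_domMn m Dv).
apply: (mx_natmul_inj m_gt0).
rewrite -mulmxMnl -map_mxMn mulmxA (conj_mxP (Dm v)) (conj_mxP D1).
by rewrite -conj_rV_mul // conj_rVMn // map_mxMn.
Qed.

Lemma conj_mxM g1 g2 : conj_mx (g1 * g2)%g = conj_mx g2 *m conj_mx g1.
Proof.
exact: represents_conj_uniq (@conj_mxP _) (@represents_conj_mul g1 g2).
Qed.

Definition rho h : 'rV[R]_n := map_mx intr (phi h).

Definition Delta g (x : 'rV[R]_n) : 'rV[R]_n := x *m conj_mx g.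

Lemma rhoM x y : L x -> L y -> rho (x * y)%g = rho x + rho y.
Proof. by move=> Lx Ly; rewrite /rho phiM // map_mxD. Qed.

Lemma rho_ker_finite : finite_set [set h | L h /\ rho h = 0].
Proof.
apply: (sub_finite_set _ (finite_set1 1%g)) => h [Lh].
rewrite -(map_mx0 intr) -phi1 => /map_mx_intr_inj.
exact: phi_inj.
Qed.

Lemma rho_discrete x : (rho @` L) x ->
  exists2 U, nbhs x U & forall y, (rho @` L) y -> U y -> y = x.
Proof.
case=> h0 _ <-; exists (ball (rho h0) 1); first exact: nbhsx_ballx.
move=> _ [h1 _ <-]; rewrite -ball_normE /ball_ /= => /intr_rV_dist_lt1.
by rewrite /rho => ->.
Qed.

Lemma rho_cocompact : exists2 K : set 'rV[R]_n, compact K &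
  forall v, exists k h, [/\ K k, L h & v = k + rho h].
Proof.
exists [set v | forall i, `[0, 1]%classic (v 0 i)].
  apply: (@rV_compact _ _ (fun=> `[0 : R, 1]%classic)) => _.
  exact: segment_compact.
move=> v; have [w cube] := unit_cube_int_translate v.
exists (v - rho (phi_inv w)), (phi_inv w).
by rewrite /rho phi_invK subrK; split=> //; exact: phi_invL.
Qed.

Lemma Delta_top_aut g : is_top_aut (Delta g).
Proof.
have DeltaK g1 g2 : (g1 * g2 = 1)%g -> cancel (Delta g2) (Delta g1).
  by move=> g12 x; rewrite /Delta -mulmxA -conj_mxM g12 conj_mxL // mulmx1.
split=> [x y|]; first exact: mulmxDl.
exists (Delta g^-1%g); split; try exact: continuous_mulmxr.
  exact: DeltaK (mulVg g).
exact: DeltaK (mulgV g).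
Qed.

Lemma DeltaM g1 g2 : Delta (g1 * g2)%g = Delta g1 \o Delta g2.
Proof. by apply/funext => x; rewrite /Delta /= conj_mxM mulmxA. Qed.

Lemma DeltaL h : L h -> Delta h = (fun x => rho h + x - rho h).
Proof.
by move=> Lh; apply/funext => x; rewrite /Delta conj_mxL // mulmx1 addrC addKr.
Qed.

Lemma Delta_compat g : exists L' : set G,
  [/\ is_subgroup L', L' `<=` L, finite_index L L' &
       forall h, L' h ->
         L (g * h * g^-1)%g /\ Delta g (rho h) = rho (g * h * g^-1)%g].
Proof.
exists (L `&` conj_set g^-1%g L); split.
- exact: is_subgroupI L_subgroup (is_subgroup_conj_set _ L_subgroup).
- by move=> h [].
- exact: commensurated.
move=> h [Lh]; rewrite conj_setE /= -conjgVE => Lconj; split=> //.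
by rewrite /Delta /rho conj_mxP /conj_rV /conj_dom /= phiK.
Qed.

Lemma engulfing_Rn_of_iso : engulfing_Rn R n L.
Proof.
exists rho, Delta.
split; first exact: rhoM.
split; first exact: rho_ker_finite.
split; first exact: rho_discrete.
split; first exact: rho_cocompact.
split; first exact: Delta_top_aut.
split; first exact: DeltaM.
split; first exact: DeltaL.
exact: Delta_compat.
Qed.

End LatticeIsoZn.

Theorem proposition3p6 (G : groupType) (L : set G) (n : nat) (R : realType) :
  hecke_pair L -> isomorphic_to_Zn L n -> engulfing_Rn R n L.
Proof.
move=> [L_subgroup commensurated] [phi [phiM phi_inj phi_surj]].
have commensurated_left g := proj1 (commensurated g).
exact: (@engulfing_Rn_of_iso _ _ _ R phi L_subgroup commensurated_left
  phiM phi_inj phi_surj).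
Qed.
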